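(* Suppose that $S\cap(\alpha\times\{b\}\times\{b\})\neq\emptyset$ for all $b\in\alpha$. Let $(\mathcal A,xAByABz)$ be a nanoword over $\alpha$, where $A,B\in\mathcal A$ with $|B|=\tau(|A|)$ and $x,y,z$ are words in $\mathcal A\setminus\{A,B\}$. Then $(\mathcal A,xAByABz)\simeq_S(\mathcal A\setminus\{A,B\},xyz)$.
   Context: Fix a set $\alpha$ with an involution $\tau$ and a subset $S\subset\alpha\times\alpha\times\alpha$. An $\alpha$-alphabet is a set $\mathcal A$ with a map $A\mapsto|A|\in\alpha$. A nanoword over $\alpha$ is a pair $(\mathcal A,w)$ with $\mathcal A$ a finite $\alpha$-alphabet and $w$ a word in which each letter of $\mathcal A$ occurs exactly twice. Nanowords are isomorphic if a bijection of alphabets preserving $|\cdot|$ carries one word letterwise to the other. $S$-homotopy moves ($x,y,z,t$ words in the remaining letters; smaller alphabets carry the restricted projection): (1) $(\mathcal A,xAAy)\mapsto(\mathcal A\setminus\{A\},xy)$; (2) $(\mathcal A,xAByBAz)\mapsto(\mathcal A\setminus\{A,B\},xyz)$ if $|B|=\tau(|A|)$; (3) $(\mathcal A,xAByACzBCt)\mapsto(\mathcal A,xBAyCAzCBt)$ if $A,B,C$ are distinct and $(|A|,|B|,|C|)\in S$. $S$-homotopy $\simeq_S$ is the equivalence relation generated by isomorphisms, these moves and their inverses. *)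

From mathcomp Require Import all_boot.
From Stdlib Require Import Relation_Operators.
Set Implicit Arguments. Unset Strict Implicit. Unset Printing Implicit Defensive.

(* A nanoword over alpha is a
   word w : seq nat in which every letter occurring occurs exactly twice,
   together with a projection p : nat -> alpha.  The alphabet of the
   nanoword is the set of letters occurring in w; values of p outside it
   are irrelevant (isomorphism ignores them). *)
Record nanoword (alpha : Type) := NW { nw_word : seq nat; nw_proj : nat -> alpha }.

Definition wf_word (w : seq nat) : Prop := forall a, a \in w -> count_mem a w = 2.

Definition is_nanoword (alpha : Type) (u : nanoword alpha) : Prop := wf_word (nw_word u).

Definition nw_iso (alpha : Type) (u v : nanoword alpha) : Prop :=
  exists f : nat -> nat,
    {in nw_word u &, injective f} /\
    map f (nw_word u) = nw_word v /\
    {in nw_word u, forall a, nw_proj v (f a) = nw_proj u a}.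

Inductive hmove (alpha : Type) (tau : alpha -> alpha) (S : alpha -> alpha -> alpha -> Prop)
  : nanoword alpha -> nanoword alpha -> Prop :=
| hmove1 (x y : seq nat) (A : nat) (p : nat -> alpha) :
    wf_word (x ++ A :: A :: y) -> A \notin x -> A \notin y ->
    hmove tau S (NW (x ++ A :: A :: y) p) (NW (x ++ y) p)
| hmove2 (x y z : seq nat) (A B : nat) (p : nat -> alpha) :
    wf_word (x ++ A :: B :: y ++ B :: A :: z) -> A != B ->
    A \notin x -> A \notin y -> A \notin z ->
    B \notin x -> B \notin y -> B \notin z ->
    p B = tau (p A) ->
    hmove tau S (NW (x ++ A :: B :: y ++ B :: A :: z) p) (NW (x ++ y ++ z) p)
| hmove3 (x y z t : seq nat) (A B C : nat) (p : nat -> alpha) :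
    wf_word (x ++ A :: B :: y ++ A :: C :: z ++ B :: C :: t) ->
    A != B -> A != C -> B != C ->
    A \notin x -> A \notin y -> A \notin z -> A \notin t ->
    B \notin x -> B \notin y -> B \notin z -> B \notin t ->
    C \notin x -> C \notin y -> C \notin z -> C \notin t ->
    S (p A) (p B) (p C) ->
    hmove tau S (NW (x ++ A :: B :: y ++ A :: C :: z ++ B :: C :: t) p)
                (NW (x ++ B :: A :: y ++ C :: A :: z ++ C :: B :: t) p).

Definition hstep (alpha : Type) (tau : alpha -> alpha) (S : alpha -> alpha -> alpha -> Prop)
  (u v : nanoword alpha) : Prop := nw_iso u v \/ hmove tau S u v.

Definition S_homotopic (alpha : Type) (tau : alpha -> alpha) (S : alpha -> alpha -> alpha -> Prop)
  : nanoword alpha -> nanoword alpha -> Prop :=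
  clos_refl_sym_trans (nanoword alpha) (hstep tau S).

From mathcomp Require Import all_boot zify.
From Stdlib Require Import Relation_Operators.

Set Implicit Arguments. Unset Strict Implicit. Unset Printing Implicit Defensive.

(* Choose c with (c, |B|, |B|) in S and fresh letters P, Q, U, V, and relabel the
   projection (an isomorphism) so that |P| = tau c, |Q| = c, |U| = |A|, |V| = |B|.
   Then
     xAByABz <-2- xPQABQPyABz <-2- xPUVQABQPyABVUz <-3- xPUQVAQBPyAVBUz
             -2-> xPUQQBPyBUz -1-> xPUBPyBUz -2-> xPPyz -1-> xyz,
   where the move 3 acts on (Q, V, B) and every move 2 removes a pair of letters
   whose projections are exchanged by the involution tau. *)

Lemma fresh_letter (s : seq nat) : exists n, n \notin s.
Proof.
exists (\max_(i <- s) i).+1; apply/negP => /(@leq_bigmax_seq _ _ xpredT id _)/(_ isT).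
by rewrite ltnn.
Qed.

Lemma count_mem_cons (T : eqType) (a b : T) (s : seq T) :
  count_mem a (b :: s) = (b == a) + count_mem a s.
Proof. by []. Qed.

Lemma wf_wordP (w : seq nat) :
  wf_word w <-> forall a, count_mem a w = 0 \/ count_mem a w = 2.
Proof.
split=> [wf a | w02 a aw].
  by have [/wf|/count_memPn] := boolP (a \in w); [right | left].
by case: (w02 a) => // /count_memPn; rewrite aw.
Qed.

Lemma wf_word_count_le2 (w : seq nat) a : wf_word w -> count_mem a w <= 2.
Proof. by move/wf_wordP/(_ a) => [|] ->. Qed.

Lemma wf_word_perm (u v : seq nat) : perm_eq u v -> wf_word u -> wf_word v.
Proof. by move=> uv wfu a; rewrite -(perm_mem uv) -(permP uv); apply: wfu. Qed.

Lemma perm_move3 (x y z t : seq nat) (A B C : nat) :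
  perm_eq (x ++ A :: B :: y ++ A :: C :: z ++ B :: C :: t)
          (x ++ B :: A :: y ++ C :: A :: z ++ C :: B :: t).
Proof. by apply/permP => a; do !rewrite count_cat /=; lia. Qed.

Lemma wf_word_insert2 (w w' x y z : seq nat) (A B : nat) :
  w = x ++ y ++ z -> w' = x ++ A :: B :: y ++ B :: A :: z ->
  wf_word w -> A \notin w -> B \notin A :: w -> wf_word w'.
Proof.
move=> -> -> /wf_wordP wf /count_memPn A0.
rewrite inE negb_or => /andP[BA /count_memPn B0]; apply/wf_wordP => a.
have := wf a; rewrite !(count_cat, count_mem_cons) in A0 B0 *.
have [<-|_] := eqVneq A a; first by rewrite (negbTE BA); right; lia.
by have [<-|_] := eqVneq B a; first by right; lia.
Qed.

Section Moves.

Variables (alpha : Type) (tau : alpha -> alpha) (S : alpha -> alpha -> alpha -> Prop).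

Lemma hmove1_of_wf (w w' x y : seq nat) (A : nat) (p : nat -> alpha) :
  w = x ++ A :: A :: y -> w' = x ++ y -> wf_word w ->
  hmove tau S (NW w p) (NW w' p).
Proof.
move=> -> -> wf; have := wf_word_count_le2 A wf.
rewrite !(count_cat, count_mem_cons) eqxx => leA.
by apply: hmove1 => //; apply/count_memPn; lia.
Qed.

Lemma hmove2_of_wf (w w' x y z : seq nat) (A B : nat) (p : nat -> alpha) :
  w = x ++ A :: B :: y ++ B :: A :: z -> w' = x ++ y ++ z -> wf_word w ->
  p B = tau (p A) -> hmove tau S (NW w p) (NW w' p).
Proof.
move=> -> -> wf pB.
have := wf_word_count_le2 A wf; have := wf_word_count_le2 B wf.
rewrite !(count_cat, count_mem_cons) !eqxx => leB leA.
have nAB : A != B by apply/eqP=> eAB; move: leA; rewrite eAB eqxx; lia.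
by apply: hmove2 => //; apply/count_memPn; lia.
Qed.

Lemma hmove3_of_wf (w w' x y z t : seq nat) (A B C : nat) (p : nat -> alpha) :
  w = x ++ A :: B :: y ++ A :: C :: z ++ B :: C :: t ->
  w' = x ++ B :: A :: y ++ C :: A :: z ++ C :: B :: t -> wf_word w ->
  S (p A) (p B) (p C) -> hmove tau S (NW w p) (NW w' p).
Proof.
move=> -> -> wf SABC.
have := wf_word_count_le2 A wf; have := wf_word_count_le2 B wf.
have := wf_word_count_le2 C wf.
rewrite !(count_cat, count_mem_cons) !eqxx => leC leB leA.
have nAB : A != B by apply/eqP=> eAB; move: leA; rewrite eAB eqxx; lia.
have nAC : A != C by apply/eqP=> eAC; move: leA; rewrite eAC eqxx; lia.
have nBC : B != C by apply/eqP=> eBC; move: leB; rewrite eBC eqxx; lia.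
by apply: hmove3 => //; apply/count_memPn; lia.
Qed.

Lemma hmove_wf (u v : nanoword alpha) : hmove tau S u v -> wf_word (nw_word v).
Proof.
case=> {u v} [x y A p | x y z A B p | x y z t A B C p].
- move=> /wf_wordP wf /count_memPn Ax /count_memPn Ay; apply/wf_wordP => a.
  have := wf a; rewrite !(count_cat, count_mem_cons).
  by have [<-|_] := eqVneq A a; first by rewrite Ax Ay; left.
- move=> /wf_wordP wf _ /count_memPn Ax /count_memPn Ay /count_memPn Az.
  move=> /count_memPn Bx /count_memPn By /count_memPn Bz _; apply/wf_wordP => a.
  have := wf a; rewrite !(count_cat, count_mem_cons).
  have [<-|_] := eqVneq A a; first by rewrite Ax Ay Az; left.
  by have [<-|_] := eqVneq B a; first by rewrite Bx By Bz; left.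
- by move=> wf *; apply: wf_word_perm wf; apply: perm_move3.
Qed.

Lemma homotopic_proj (w : seq nat) (p p' : nat -> alpha) :
  {in w, p' =1 p} -> S_homotopic tau S (NW w p) (NW w p').
Proof.
by move=> pp'; apply/rst_step; left; exists id; split=> [//|]; rewrite map_id.
Qed.

Lemma homotopic_hmove_l (u v w : nanoword alpha) :
  hmove tau S u v -> S_homotopic tau S v w -> S_homotopic tau S u w.
Proof. by move=> uv; apply/rst_trans/rst_step; right. Qed.

Lemma homotopic_hmove_r (u v w : nanoword alpha) :
  hmove tau S v u -> S_homotopic tau S v w -> S_homotopic tau S u w.
Proof. by move=> vu; apply/rst_trans/rst_sym/rst_step; right. Qed.

Section ParallelPair.

Hypothesis tauK : involutive tau.

Variables (x y z : seq nat) (A B P Q U V : nat) (p : nat -> alpha).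

Local Notation W0 := (x ++ A :: B :: y ++ A :: B :: z).
Local Notation W1 := (x ++ P :: Q :: A :: B :: Q :: P :: y ++ A :: B :: z).
Local Notation W2 :=
  (x ++ P :: U :: V :: Q :: A :: B :: Q :: P :: y ++ A :: B :: V :: U :: z).
Local Notation W3 :=
  (x ++ P :: U :: Q :: V :: A :: Q :: B :: P :: y ++ A :: V :: B :: U :: z).
Local Notation W4 := (x ++ P :: U :: Q :: Q :: B :: P :: y ++ B :: U :: z).
Local Notation W5 := (x ++ P :: U :: B :: P :: y ++ B :: U :: z).
Local Notation W6 := (x ++ P :: P :: y ++ z).

Hypotheses (wf0 : wf_word W0) (PW0 : P \notin W0) (QW0 : Q \notin P :: W0)
  (UW0 : U \notin [:: Q, P & W0]) (VW0 : V \notin [:: U, Q, P & W0]).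
Hypotheses (pB : p B = tau (p A)) (pQ : p Q = tau (p P)) (pU : p U = p A)
  (pV : p V = p B) (SQBB : S (p Q) (p B) (p B)).

Let memW1 : W1 =i [:: Q, P & W0].
Proof. by move=> n; rewrite -!has_pred1 !has_count; do !rewrite count_cat /=; lia. Qed.

Let wf1 : wf_word W1.
Proof. exact: (wf_word_insert2 (x := x) (y := [:: A; B]) erefl erefl wf0 PW0 QW0). Qed.

Let wf2 : wf_word W2.
Proof.
apply: (wf_word_insert2 (x := x ++ [:: P])
          (y := Q :: A :: B :: Q :: P :: y ++ [:: A; B]) (z := z) _ _ wf1).
- by rewrite /= -!catA.
- by rewrite /= -!catA.
- by rewrite memW1.
- by rewrite in_cons memW1.
Qed.

Let wf3 : wf_word W3.
Proof. by apply: wf_word_perm wf2; apply/permP => a; do !rewrite count_cat /=; lia. Qed.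

Let homotopic_W0_W3 : S_homotopic tau S (NW W0 p) (NW W3 p).
Proof.
have m10 : hmove tau S (NW W1 p) (NW W0 p).
  exact: (hmove2_of_wf (x := x) (y := [:: A; B]) erefl erefl wf1 pQ).
have m21 : hmove tau S (NW W2 p) (NW W1 p).
  apply: (hmove2_of_wf (x := x ++ [:: P])
            (y := Q :: A :: B :: Q :: P :: y ++ [:: A; B]) (z := z) _ _ wf2).
  - by rewrite /= -!catA.
  - by rewrite /= -!catA.
  - by rewrite pV pU.
have m32 : hmove tau S (NW W3 p) (NW W2 p).
  apply: (hmove3_of_wf (x := x ++ [:: P; U]) (y := [:: A]) (z := P :: y ++ [:: A])
            (t := U :: z) _ _ wf3).
  - by rewrite /= -!catA.
  - by rewrite /= -!catA.
  - by rewrite pV.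
apply: (homotopic_hmove_r m10); apply: (homotopic_hmove_r m21).
apply: (homotopic_hmove_r m32); exact: rst_refl.
Qed.

Let homotopic_W3_xyz : S_homotopic tau S (NW W3 p) (NW (x ++ y ++ z) p).
Proof.
have m34 : hmove tau S (NW W3 p) (NW W4 p).
  apply: (hmove2_of_wf (x := x ++ [:: P; U; Q]) (y := Q :: B :: P :: y)
            (z := B :: U :: z) _ _ wf3).
  - by rewrite /= -!catA.
  - by rewrite /= -!catA.
  - by rewrite pV pB tauK.
have m45 : hmove tau S (NW W4 p) (NW W5 p).
  apply: (hmove1_of_wf (x := x ++ [:: P; U]) (y := B :: P :: y ++ B :: U :: z) p _ _
            (hmove_wf m34)).
  - by rewrite /= -!catA.
  - by rewrite /= -!catA.
have m56 : hmove tau S (NW W5 p) (NW W6 p).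
  apply: (hmove2_of_wf (x := x ++ [:: P]) (y := P :: y) (z := z) _ _ (hmove_wf m45)).
  - by rewrite /= -!catA.
  - by rewrite /= -!catA.
  - by rewrite pU.
have m67 : hmove tau S (NW W6 p) (NW (x ++ y ++ z) p).
  exact: (hmove1_of_wf (x := x) (y := y ++ z) p erefl erefl (hmove_wf m56)).
apply: (homotopic_hmove_l m34); apply: (homotopic_hmove_l m45).
apply: (homotopic_hmove_l m56); apply: (homotopic_hmove_l m67).
exact: rst_refl.
Qed.

Lemma parallel_pair_homotopic : S_homotopic tau S (NW W0 p) (NW (x ++ y ++ z) p).
Proof. exact: (rst_trans _ _ _ _ _ homotopic_W0_W3 homotopic_W3_xyz). Qed.

End ParallelPair.

End Moves.

Theorem lemma3p2 (alpha : Type) (tau : alpha -> alpha)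
  (S : alpha -> alpha -> alpha -> Prop) :
  involutive tau ->
  (forall b : alpha, exists a : alpha, S a b b) ->
  forall (x y z : seq nat) (A B : nat) (p : nat -> alpha),
    wf_word (x ++ A :: B :: y ++ A :: B :: z) ->
    A != B ->
    A \notin x -> A \notin y -> A \notin z ->
    B \notin x -> B \notin y -> B \notin z ->
    p B = tau (p A) ->
    S_homotopic tau S (NW (x ++ A :: B :: y ++ A :: B :: z) p) (NW (x ++ y ++ z) p).
Proof.
(* The distinctness and non-occurrence hypotheses follow from well-formedness. *)
move=> tauK Sbb x y z A B p wf0 _ _ _ _ _ _ _ pB.
have [c Sc] := Sbb (p B).
set W0 := x ++ A :: B :: y ++ A :: B :: z.
have [P PW0] := fresh_letter W0.
have [Q QW0] := fresh_letter (P :: W0).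
have [U UW0] := fresh_letter [:: Q, P & W0].
have [V VW0] := fresh_letter [:: U, Q, P & W0].
pose p' n := if n \notin [:: U, Q, P & W0] then p B
             else if n \notin [:: Q, P & W0] then p A
             else if n \notin P :: W0 then c
             else if n \notin W0 then tau c else p n.
have p'W0 : {in W0, p' =1 p} by move=> n nW0; rewrite /p' !in_cons nW0 !orbT.
have [p'A p'B] : p' A = p A /\ p' B = p B.
  by split; apply: p'W0; rewrite !(mem_cat, in_cons) eqxx ?orbT.
have p'V : p' V = p B by rewrite /p' VW0.
have p'U : p' U = p A by rewrite /p' mem_head UW0.
have p'Q : p' Q = c by rewrite /p' in_cons mem_head orbT QW0.
have p'P : p' P = tau c by rewrite /p' !in_cons eqxx !orbT PW0.
apply: (rst_trans _ _ _ (NW W0 p')); first exact: homotopic_proj.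
apply: (rst_trans _ _ _ (NW (x ++ y ++ z) p')).
  apply: (parallel_pair_homotopic tauK wf0 PW0 QW0 UW0 VW0);
  by rewrite ?p'A ?p'B ?p'P ?p'Q ?p'U ?p'V.
apply/rst_sym/homotopic_proj => n nxyz; apply: p'W0.
by move: nxyz; rewrite !(mem_cat, in_cons) => /or3P[] ->; rewrite ?orbT.
Qed.
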